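(* Let $a,b\in GF(q)\setminus\{0\}$, $a\ne b$, with $b/a$ a square in $GF(q)$, and let $\mathcal B^1_{(s_1,c_1)},\mathcal B^1_{(s_2,c_2)}\in\tau(a,b)$. Then these two circles are tangential to $\mathcal B_a$ in the same point $P$ or in the opposite points $P$ and $-P$, respectively, if and only if $s_1\bar s_2\in GF(q)\setminus\{0\}$. In that case $P$ satisfies $$\frac{P^2}{a}=\frac{s_1}{\bar s_1}=\frac{s_2}{\bar s_2}.$$
   Context: Let $p$ be an odd prime, $m\ge1$, and $q=p^m$. $GF(q^2)$ denotes the quadratic extension of $GF(q)$, and for $z\in GF(q^2)$ we write $\bar z:=z^{q}$. The Miquelian Möbius plane $\mathbb M(q)$ has point set $GF(q^2)\cup\{\infty\}$ and circles of two types: for $s\in GF(q^2)$ and $c\in GF(q)\setminus\{0\}$, the circle of the first type $\mathcal B^1_{(s,c)}=\{z\in GF(q^2):(z-s)(\bar z-\bar s)=c\}$; for $s\in GF(q^2)\setminus\{0\}$ and $c\in GF(q)$, the circle of the second type $\mathcal B^2_{(s,c)}=\{z\in GF(q^2):\bar s z+s\bar z=c\}\cup\{\infty\}$. Two circles are called tangential if they have exactly one point in common. For $a\in GF(q)\setminus\{0\}$ put $\mathcal B_a:=\mathcal B^1_{(0,a)}$, and for $a,b\in GF(q)\setminus\{0\}$ let $\tau(a,b)$ be the set of circles tangential to both $\mathcal B_a$ and $\mathcal B_b$. Note that $P\in\mathcal B_a$ implies $-P\in\mathcal B_a$; $-P$ is called the opposite point of $P$. *)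

From HB Require Import structures.
From mathcomp Require Import all_boot all_order all_algebra all_field.
Set Implicit Arguments. Unset Strict Implicit. Unset Printing Implicit Defensive.
Import GRing.Theory.
Local Open Scope ring_scope.

Section Moebius.
Variable L : finFieldType.   (* plays the role of GF(q^2) *)
Variable q : nat.            (* q = p^m *)

Definition conjq (z : L) : L := z ^+ q.

(* GF(q) as the subfield of fixed points of z |-> z^q *)
Definition inGFq (z : L) : bool := conjq z == z.

(* points of M(q): GF(q^2) ∪ {∞}, with None = ∞ *)
Definition point := option L.

Definition circle1 (s c : L) : {set point} :=
  [set x : point | if x is Some z then (z - s) * (conjq z - conjq s) == c else false].

Definition circle2 (s c : L) : {set point} :=
  [set x : point | if x is Some z then conjq s * z + s * conjq z == c else true].

Definition is_circle (C : {set point}) : Prop :=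
  exists s c : L,
    (inGFq c /\ c != 0 /\ C = circle1 s c) \/
    (s != 0 /\ inGFq c /\ C = circle2 s c).

Definition tangential (C D : {set point}) : Prop := #|C :&: D| = 1%N.

Definition Bc (a : L) : {set point} := circle1 0 a.

Definition tau (a b : L) (C : {set point}) : Prop :=
  is_circle C /\ tangential C (Bc a) /\ tangential C (Bc b).

End Moebius.

From HB Require Import structures.
From mathcomp Require Import all_boot all_order all_algebra all_field.
From mathcomp Require Import ring.
Set Implicit Arguments.
Unset Strict Implicit.
Unset Printing Implicit Defensive.
Import GRing.Theory.
Local Open Scope ring_scope.

(* The map z |-> (s / conj s) * conj z is the reflection in the line through 0
   and s; it preserves every circle centred on that line, in particular
   circle1 s c and Bc a.  A unique common point P of the two circles is
   therefore fixed by it, i.e. conj s * P = s * conj P, and with P conj P = a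
   this reads P^2 / a = s / conj s.  Hence two such tangency points satisfy
   P1^2 = P2^2, i.e. P2 = +-P1, exactly when s1 / conj s1 = s2 / conj s2, which
   is the statement that s1 conj s2 is fixed by conjugation. *)

Section Conjugation.
Variables (L : finFieldType) (q : nat).
Hypothesis q_gt0 : (0 < q)%N.
Local Notation conj := (@conjq L q).

Lemma conjqM (x y : L) : conj (x * y) = conj x * conj y.
Proof. exact: exprMn. Qed.

Lemma conjqV (x : L) : conj x^-1 = (conj x)^-1.
Proof. exact: exprVn. Qed.

Lemma conjq_eq0 (x : L) : (conj x == 0) = (x == 0).
Proof. by rewrite /conjq expf_eq0 q_gt0. Qed.

Lemma conjq0 : conj 0 = 0 :> L.
Proof. by apply/eqP; rewrite conjq_eq0. Qed.

Lemma conjqN (x : L) : odd q -> conj (- x) = - conj x.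
Proof. by move=> q_odd; rewrite /conjq exprNn -signr_odd q_odd mulN1r. Qed.

Lemma conjq_involutive : #|L| = (q ^ 2)%N -> involutive conj.
Proof. by move=> cardL x; rewrite /conjq -exprM mulnn -cardL expf_card. Qed.

Lemma inGFq_mul_conj_eq (s1 s2 : L) : involutive conj -> s1 != 0 -> s2 != 0 ->
  (inGFq q (s1 * conj s2) /\ s1 * conj s2 != 0) <-> s1 / conj s1 = s2 / conj s2.
Proof.
move=> conjK s1_neq0 s2_neq0.
have cs1_neq0 : conj s1 != 0 by rewrite conjq_eq0.
have cs2_neq0 : conj s2 != 0 by rewrite conjq_eq0.
rewrite /inGFq conjqM conjK mulf_neq0 ?conjq_eq0 //.
have -> : (s1 / conj s1 = s2 / conj s2) <-> (conj s1 * s2 = s1 * conj s2).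
  have := eqr_div s1 s2 cs1_neq0 cs2_neq0.
  rewrite (mulrC s2 (conj s1)) [in RHS]eq_sym => e.
  by split=> /eqP; [rewrite e | rewrite -e] => /eqP.
by split=> [[/eqP] | ->].
Qed.

End Conjugation.

Lemma finField_two_neq0 (L : finFieldType) (p n : nat) :
  prime p -> odd p -> #|L| = (p ^ n)%N -> (2%:R : L) != 0.
Proof.
move=> p_pr p_odd cardL; have pL := card_finPcharP cardL p_pr.
apply/eqP => two_eq0.
have : 2%N \in [pchar L] by rewrite inE two_eq0 eqxx.
by rewrite (pcharf_eq pL) inE => /eqP p2; rewrite -p2 in p_odd.
Qed.

Section Tangency.
Variables (L : finFieldType) (q : nat).
Hypotheses (q_gt0 : (0 < q)%N) (q_odd : odd q).
Hypothesis conjK : involutive (conjq q : L -> L).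
Hypothesis two_neq0 : (2%:R : L) != 0.
Local Notation conj := (@conjq L q).

Definition reflect_line (s z : L) : L := s * conj z / conj s.

Lemma in_circle1 (s c z : L) :
  (Some z \in circle1 q s c) = ((z - s) * (conj z - conj s) == c).
Proof. by rewrite inE. Qed.

Lemma in_Bc (a z : L) : (Some z \in Bc q a) = (z * conj z == a).
Proof. by rewrite in_circle1 conjq0 // !subr0. Qed.

Lemma tangential_circle1 (s c a : L) : tangential (circle1 q s c) (Bc q a) ->
  exists P, circle1 q s c :&: Bc q a = [set Some P].
Proof.
move/eqP/cards1P => [[P|] E]; first by exists P.
by have := set11 (None : point L); rewrite -E !inE.
Qed.

Lemma conjq_reflect_line (s z : L) : conj (reflect_line s z) = conj s * z / s.
Proof. by rewrite /reflect_line !(conjqM, conjqV) // !conjK. Qed.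

Lemma reflect_line_circle1 (s c z : L) : s != 0 ->
  (Some (reflect_line s z) \in circle1 q s c) = (Some z \in circle1 q s c).
Proof.
move=> s_neq0; have cs_neq0 : conj s != 0 by rewrite conjq_eq0.
rewrite !in_circle1 conjq_reflect_line /reflect_line.
by congr (_ == c); field; rewrite s_neq0 cs_neq0.
Qed.

Lemma reflect_line_Bc (s a z : L) : s != 0 ->
  (Some (reflect_line s z) \in Bc q a) = (Some z \in Bc q a).
Proof.
move=> s_neq0; have cs_neq0 : conj s != 0 by rewrite conjq_eq0.
rewrite !in_Bc conjq_reflect_line /reflect_line.
by congr (_ == a); field; rewrite s_neq0 cs_neq0.
Qed.

Section TangencyPoint.
Variables (s c a P : L).
Hypothesis a_neq0 : a != 0.
Hypothesis meet1 : circle1 q s c :&: Bc q a = [set Some P].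

Let meet z : (Some z \in circle1 q s c :&: Bc q a) = (z == P).
Proof. by rewrite meet1 !inE. Qed.

Let onC : (P - s) * (conj P - conj s) = c.
Proof. by apply/eqP; have := meet P; rewrite eqxx inE in_circle1 => /andP[]. Qed.

Let onB : P * conj P = a.
Proof. by apply/eqP; have := meet P; rewrite eqxx inE in_Bc => /andP[]. Qed.

Let P_neq0 : P != 0.
Proof. by apply: contraNneq a_neq0 => P0; rewrite -onB P0 mul0r. Qed.

(* otherwise the circles are concentric and -P is a second common point *)
Lemma tangent_center_neq0 : s != 0.
Proof.
apply/eqP => s0.
have : Some (- P) \in circle1 q s c :&: Bc q a.
  rewrite inE in_circle1 in_Bc conjqN // s0 conjq0 // !subr0 mulrNN.
  by rewrite -onC -onB s0 conjq0 // !subr0 !eqxx.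
rewrite meet eq_sym -subr_eq0 opprK -mulr2n -mulr_natr mulf_eq0.
by rewrite (negPf P_neq0) (negPf two_neq0).
Qed.

Lemma tangent_point_sqr : P ^+ 2 / a = s / conj s.
Proof.
have s_neq0 := tangent_center_neq0.
have cP_neq0 : conj P != 0 by rewrite conjq_eq0.
have fixP : reflect_line s P = P.
  apply/eqP; rewrite -meet in_setI reflect_line_circle1 // reflect_line_Bc //.
  by rewrite -in_setI meet.
have -> : P ^+ 2 / a = P / conj P by rewrite -onB; field; rewrite P_neq0 cP_neq0.
by apply/eqP; rewrite eqr_div ?conjq_eq0 // -{1}fixP divfK ?conjq_eq0.
Qed.

End TangencyPoint.

End Tangency.

Theorem mainTheorem3 (p m : nat) (L : finFieldType)
  (hp : prime p) (hodd : odd p) (hm : (0 < m)%N)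
  (hcard : #|L| = ((p ^ m) ^ 2)%N)
  (a b s1 c1 s2 c2 : L)
  (ha : inGFq (p ^ m) a) (ha0 : a != 0)
  (hb : inGFq (p ^ m) b) (hb0 : b != 0) (hab : a != b)
  (hsq : exists x : L, inGFq (p ^ m) x /\ b / a = x ^+ 2)
  (hc1 : inGFq (p ^ m) c1) (hc10 : c1 != 0)
  (hc2 : inGFq (p ^ m) c2) (hc20 : c2 != 0)
  (ht1 : tau (p ^ m) a b (circle1 (p ^ m) s1 c1))
  (ht2 : tau (p ^ m) a b (circle1 (p ^ m) s2 c2)) :
  ((exists P : L,
      circle1 (p ^ m) s1 c1 :&: Bc (p ^ m) a = [set Some P] /\
      (circle1 (p ^ m) s2 c2 :&: Bc (p ^ m) a = [set Some P] \/
       circle1 (p ^ m) s2 c2 :&: Bc (p ^ m) a = [set Some (- P)]))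
   <-> (inGFq (p ^ m) (s1 * conjq (p ^ m) s2) /\ s1 * conjq (p ^ m) s2 != 0))
  /\
  ((inGFq (p ^ m) (s1 * conjq (p ^ m) s2) /\ s1 * conjq (p ^ m) s2 != 0) ->
   forall P : L, circle1 (p ^ m) s1 c1 :&: Bc (p ^ m) a = [set Some P] ->
     P ^+ 2 / a = s1 / conjq (p ^ m) s1 /\ s1 / conjq (p ^ m) s1 = s2 / conjq (p ^ m) s2).
Proof.
set q := (p ^ m)%N.
have q_gt0 : (0 < q)%N by rewrite expn_gt0 prime_gt0.
have q_odd : odd q by rewrite oddX hodd orbT.
have conjK := conjq_involutive hcard.
have two_neq0 : (2%:R : L) != 0.
  by apply: (finField_two_neq0 hp hodd (n := (m * 2)%N)); rewrite expnM.
have tangent s c P : circle1 q s c :&: Bc q a = [set Some P] ->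
    s != 0 /\ P ^+ 2 / a = s / conjq q s.
  by move=> E; split; [apply: tangent_center_neq0 E | apply: tangent_point_sqr E].
case: ht1 => _ [/tangential_circle1 [P1 E1] _].
case: ht2 => _ [/tangential_circle1 [P2 E2] _].
have [s1_neq0 sqrP1] := tangent _ _ _ E1.
have [s2_neq0 sqrP2] := tangent _ _ _ E2.
rewrite inGFq_mul_conj_eq //; split; last first.
  by move=> ratio_eq P /tangent[_ sqrP].
split=> [[P [/tangent[_ <-]]] | ratio_eq].
  by case=> /tangent[_]; rewrite ?sqrrN.
exists P1; split=> //; rewrite E2.
have : P2 ^+ 2 / a = P1 ^+ 2 / a by rewrite sqrP1 sqrP2 ratio_eq.
move/(mulIf (invr_neq0 ha0))/eqP; rewrite eqf_sqr.
by case/orP=> /eqP ->; [left | right].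
Qed.
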